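(* Let $G$ be a graph, $\theta$ a real number, and $u,v$ two distinct $\theta$-positive vertices of $G$. Then $\mathrm{mult}(\theta,G\setminus\{u,v\})\le\mathrm{mult}(\theta,G)$ if and only if there exists a path $P$ in $G$ from $u$ to $v$ such that $\mathrm{mult}(\theta,G\setminus P)\le\mathrm{mult}(\theta,G)$.
   Context: All graphs are finite and simple. For a graph $G$ on $n$ vertices, let $p(G,r)$ be the number of $r$-matchings of $G$ ($p(G,0)=1$); the matching polynomial is $\mu(G,x)=\sum_{r=0}^{\lfloor n/2\rfloor}(-1)^r p(G,r)x^{n-2r}$ (the graph with no vertices has $\mu=1$). For real $\theta$, $\mathrm{mult}(\theta,G)$ is the multiplicity of $\theta$ as a root of $\mu(G,x)$ (it is $0$ if $\theta$ is not a root). $G\setminus X$ denotes deletion of the vertex set $X$ and its incident edges; for a path $P$, $G\setminus P$ is $G$ with all vertices of $P$ deleted. A vertex $u$ is $\theta$-positive in $G$ if $\mathrm{mult}(\theta,G\setminus\{u\})=\mathrm{mult}(\theta,G)+1$. *)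

From HB Require Import structures.
From mathcomp Require Import all_boot all_order all_algebra.
Set Implicit Arguments. Unset Strict Implicit. Unset Printing Implicit Defensive.
Import Order.TTheory GRing.Theory Num.Theory.

(* A simple graph is a symmetric irreflexive relation e on a finType T
   (vertex set = all of T).  For S : {set T}, "graph S" below means the
   induced subgraph of (T,e) on S; so G \ X is the induced subgraph on ~: X. *)

Definition is_matching (T : finType) (e : rel T) (S : {set T})
    (M : {set {set T}}) : bool :=
  [forall A in M, [exists a, [exists b,
     [&& A == [set a; b], e a b, a \in S & b \in S]]]] && trivIset M.

Definition nmatch (T : finType) (e : rel T) (S : {set T}) (r : nat) : nat :=
  #|[set M : {set {set T}} | is_matching e S M && (#|M| == r)]|.

Local Open Scope ring_scope.

Definition match_poly (R : nzRingType) (T : finType) (e : rel T)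
    (S : {set T}) : {poly R} :=
  \sum_(r < (#|S| %/ 2).+1)
     ((-1) ^+ r * (nmatch e S r)%:R) *: 'X^(#|S| - r.*2).

Definition mult (R : fieldType) (T : finType) (e : rel T) (theta : R)
    (S : {set T}) : nat :=
  mup theta (match_poly R e S).

Definition theta_positive (R : fieldType) (T : finType) (e : rel T)
    (theta : R) (u : T) : Prop :=
  mult e theta (~: [set u]) = (mult e theta [set: T]).+1.

(* Let u != v be theta-positive vertices of G and m = mult(theta, G), so that
   theta has multiplicity m + 1 in mu(G\u) and in mu(G\v).  The proof rests
   on the Heilmann-Lieb identity

     mu(G\u) mu(G\v) - mu(G) mu(G\{u,v}) = sum_{P : u-v path} mu(G\P)^2,

   whose left-hand side has theta with multiplicity 2m + 2 in its first term
   and m + mult(theta, G\{u,v}) in its second.  Over a real closed field,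
   the multiplicity of theta in a sum of nonzero squares is twice the least
   multiplicity in the summands; comparing both sides modulo (x - theta)^(2m+1)
   shows that mult(theta, G\{u,v}) <= m iff mult(theta, G\P) <= m for some P. *)
From HB Require Import structures.
From mathcomp Require Import all_boot all_order all_algebra.
From mathcomp Require Import ring.
Set Implicit Arguments. Unset Strict Implicit. Unset Printing Implicit Defensive.
Import Order.TTheory GRing.Theory Num.Theory.

Lemma mem_allpairs_cons (A : eqType) (xs : seq A) (f : A -> seq (seq A)) x s :
  (x :: s \in [seq y :: t | y <- xs, t <- f y]) = (x \in xs) && (s \in f x).
Proof.
apply/allpairsPdep/andP => [[y [t [yxs tf [-> ->]]]]|[xxs sf]] //.
by exists x, s.
Qed.

Section Graph.
Variables (T : finType) (e : rel T).
Hypotheses (e_sym : symmetric e) (e_irr : irreflexive e).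
Implicit Types (S : {set T}) (M : {set {set T}}).

Lemma is_matchingP S M :
  reflect ((forall A, A \in M -> exists a b,
              [/\ A = [set a; b], e a b, a \in S & b \in S]) /\ trivIset M)
          (is_matching e S M).
Proof.
apply: (iffP andP) => [[/forall_inP H tM]|[H tM]]; split=> //.
- move=> A /H /existsP[a /existsP[b /and4P[/eqP-> ? ? ?]]]; by exists a, b.
- apply/forall_inP => A /H [a [b [-> ? ? ?]]]; apply/existsP; exists a.
  by apply/existsP; exists b; rewrite eqxx; apply/and4P.
Qed.

Lemma edge_neq a b : e a b -> a != b.
Proof. by apply: contraTneq => ->; rewrite e_irr. Qed.

Lemma matching_block S M A : is_matching e S M -> A \in M ->
  exists a b, [/\ A = [set a; b], e a b, a \in S & b \in S].
Proof. by move=> /is_matchingP[H _]; apply: H. Qed.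

Lemma matching_triv S M : is_matching e S M -> trivIset M.
Proof. by case/is_matchingP. Qed.

Lemma matching_sub S M A : is_matching e S M -> A \in M -> A \subset S.
Proof.
move=> mM /(matching_block mM) [a [b [-> _ aS bS]]].
by apply/subsetP => x; rewrite !inE => /orP[]/eqP->.
Qed.

(* A matching of S covers 2|M| distinct vertices of S. *)
Lemma matching_card S M : is_matching e S M -> (#|M|.*2 <= #|S|)%N.
Proof.
move=> mM; have /eqP cover_card := matching_triv mM.
have -> : (#|M|.*2 = \sum_(B in M) #|B|)%N.
  rewrite -muln2 -sum_nat_const; apply: eq_bigr => B BM.
  have [a [b [-> eab _ _]]] := matching_block mM BM.
  by rewrite cards2 (edge_neq eab).
rewrite cover_card; apply/subset_leq_card/bigcupsP => B BM.
exact: matching_sub mM BM.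
Qed.

(* The empty matching; it yields the leading term of mu. *)
Lemma matching0 S : is_matching e S set0.
Proof.
apply/is_matchingP; split=> [A|]; first by rewrite inE.
by apply/trivIsetP => A B; rewrite inE.
Qed.

Lemma block_edge S M u w : is_matching e S M -> [set u; w] \in M ->
  [/\ e u w, u \in S & w \in S].
Proof.
move=> mM /(matching_block mM) [a [b [E eab aS bS]]].
have nab := edge_neq eab.
have [uab wab] : u \in [set a; b] /\ w \in [set a; b] by rewrite -E !inE !eqxx orbT.
have [auw buw] : a \in [set u; w] /\ b \in [set u; w] by rewrite E !inE !eqxx orbT.
move: uab wab auw buw; rewrite !inE.
case/orP=> /eqP->; case/orP=> /eqP->; rewrite ?eqxx ?orbb //=.
- by move=> _ /eqP ab; rewrite ab eqxx in nab.
- by move=> _ _; rewrite e_sym.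
- by move=> /eqP ab _; rewrite ab eqxx in nab.
Qed.

Lemma block_uniq S M u w1 w2 : is_matching e S M ->
  [set u; w1] \in M -> [set u; w2] \in M -> w1 = w2.
Proof.
move=> mM B1 B2; have [e1 _ _] := block_edge mM B1.
have [E|ne] := eqVneq [set u; w1] [set u; w2].
  have : w1 \in [set u; w2] by rewrite -E !inE eqxx orbT.
  rewrite !inE => /orP[/eqP E1|/eqP //].
  by move: e1; rewrite E1 e_irr.
have /disjointFr := trivIsetP (matching_triv mM) _ _ B1 B2 ne.
by move=> /(_ u); rewrite !inE eqxx => /(_ isT).
Qed.

Lemma cover_block S M u : is_matching e S M -> u \in cover M ->
  exists w, [set u; w] \in M.
Proof.
move=> mM /bigcupP[B BM uB].
have [a [b [E _ _ _]]] := matching_block mM BM.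
move: uB; rewrite E !inE => /orP[]/eqP->; first by exists b; rewrite -E.
by exists a; rewrite setUC -E.
Qed.

Lemma block_cover M u w : [set u; w] \in M -> u \in cover M.
Proof. by move=> BM; apply/bigcupP; exists [set u; w]; rewrite ?setU11. Qed.

Lemma matching_del S M u : u \in S ->
  (is_matching e S M && (u \notin cover M)) = is_matching e (S :\ u) M.
Proof.
move=> uS; apply/idP/idP.
- case/andP=> mM nc; apply/is_matchingP; split; last exact: matching_triv mM.
  move=> A AM; have [a [b [E eab aS bS]]] := matching_block mM AM.
  have [aA bA] : a \in A /\ b \in A by rewrite E !inE !eqxx orbT.
  exists a, b; split=> //; rewrite !inE ?aS ?bS andbT.
  + by apply: contraNneq nc => <-; apply/bigcupP; exists A.
  + by apply: contraNneq nc => <-; apply/bigcupP; exists A.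
- move=> mM; apply/andP; split.
  + apply/is_matchingP; split=> [A AM|]; last exact: matching_triv mM.
    have [a [b [E eab]]] := matching_block mM AM.
    by rewrite !inE => /andP[_ aS] /andP[_ bS]; exists a, b.
  + apply/bigcupP => -[B BM uB].
    by have := subsetP (matching_sub mM BM) u uB; rewrite !inE eqxx.
Qed.

Lemma matching_add S M u w : u \in S -> w \in S -> e u w ->
  (is_matching e S ([set u; w] |: M) && ([set u; w] \notin M)) =
  is_matching e (S :\: [set u; w]) M.
Proof.
move=> uS wS euw; set B := [set u; w]; apply/idP/idP.
- case/andP=> mM nM; apply/is_matchingP; split; last first.
    by apply: trivIsetS (matching_triv mM); apply/subsetP => A; rewrite !inE orbC => ->.
  move=> A AM; have AM' : A \in B |: M by rewrite !inE AM orbT.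
  have [a [b [E eab aS bS]]] := matching_block mM AM'.
  have ne : B != A by apply: contraNneq nM => ->.
  have dis := trivIsetP (matching_triv mM) _ _ (setU11 _ _) AM' ne.
  have [aA bA] : a \in A /\ b \in A by rewrite E !inE !eqxx orbT.
  by exists a, b; split; rewrite // inE (disjointFl dis).
- move=> mM; have nM : B \notin M.
    apply/negP => /(matching_sub mM)/subsetP/(_ u).
    by rewrite !inE eqxx => /(_ isT).
  rewrite nM andbT; apply/is_matchingP; split.
    move=> A; rewrite !inE => /orP[/eqP->|AM]; first by exists u, w.
    have [a [b [E eab]]] := matching_block mM AM.
    by rewrite !inE => /andP[_ aS] /andP[_ bS]; exists a, b.
  have disB : {in M, forall A : {set T}, [disjoint B & A]}.
    move=> A AM; rewrite disjoint_sym; apply/pred0P => x /=.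
    apply/negP => /andP[xA]; have := subsetP (matching_sub mM AM) x xA.
    by rewrite !inE => /andP[/negPf->].
  have M0 : set0 \notin M.
    apply/negP => /(matching_block mM) [a [b [E _ _ _]]].
    by have := in_set0 a; rewrite E !inE eqxx.
  by have [] := trivIsetU1 disB (matching_triv mM) M0.
Qed.


(* s is the list of vertices after u of a path in G[S] from u to v. *)
Definition upath S u v (s : seq T) : bool :=
  [&& path e u s, last u s == v, uniq (u :: s) & all [in S] (u :: s)].

(* Enumeration of the u-v paths of G[S] by their first step u -> w; the
   fuel n only needs to be at least #|S| (see upathsP). *)
Fixpoint upaths (n : nat) S u v : seq (seq T) :=
  if n is n'.+1 then
    (if e u v then [:: [:: v]] else [::]) ++
    [seq w :: s | w <- enum [set w in S | e u w && (w != v)],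
                  s <- upaths n' (S :\ u) w v]
  else [::].

Lemma upath_cons S u v w s : u \in S ->
  upath S u v (w :: s) = e u w && upath (S :\ u) w v s.
Proof.
move=> uS; rewrite /upath.
have -> : all [in S :\ u] (w :: s) = (u \notin w :: s) && all [in S] (w :: s).
  by rewrite -has_pred1 -all_predC -all_predI; apply: eq_all => x; rewrite !inE eq_sym.
rewrite /= uS /= -!andbA; bool_congr.
by case: (u \in w :: s); rewrite /= ?andbF.
Qed.

Lemma upath_loop S v s : upath S v v s = (s == [::]) && (v \in S).
Proof.
case: s => [|x s]; first by rewrite /upath /= eqxx andbT.
rewrite /upath /=; apply/negbTE/and4P => -[_ /eqP lst /andP[vx _] _].
by move: vx; rewrite -lst mem_last.
Qed.

Lemma upathsP n S u v s : (#|S| <= n)%N -> u \in S -> v \in S -> u != v ->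
  (s \in upaths n S u v) = upath S u v s.
Proof.
elim: n S u s => [|n IH] S u s; first by rewrite leqn0 => /eqP/cards0_eq->; rewrite inE.
move=> cardS uS vS nuv; have cardSu : (#|S :\ u| <= n)%N.
  by move: cardS; rewrite (cardsD1 u S) uS.
have vSu : v \in S :\ u by rewrite !inE vS eq_sym nuv.
case: s => [|w s] /=; rewrite mem_cat.
  rewrite /upath /= (negPf nuv) /=.
  case: allpairsPdep => [[? [? [_ _ //]]]|_]; rewrite orbF.
  by case: (e u v).
rewrite upath_cons // mem_allpairs_cons mem_enum !inE.
have [->|nwv] := eqVneq w v.
  rewrite upath_loop vSu /= !andbF orbF andbT.
  by case: (e u v); rewrite //= inE eqseq_cons eqxx.
have -> : (w :: s \in (if e u v then [:: [:: v]] else [::])) = false.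
  by case: (e u v); rewrite // inE eqseq_cons (negPf nwv).
rewrite andbT /=; have [euw|] := boolP (e u w); rewrite ?andbF //=.
have [wS|wS] := boolP (w \in S); last by rewrite /upath /= !inE (negPf wS) !andbF.
by rewrite IH // !inE wS eq_sym edge_neq.
Qed.

Section MatchingPolynomial.
Variable R : comNzRingType.
Local Open Scope ring_scope.

Definition mterm S M : {poly R} := (-1) ^+ #|M| *: 'X^(#|S| - #|M|.*2).

Definition mu S : {poly R} := \sum_(M | is_matching e S M) mterm S M.

(* Grouping matchings by size recovers the definition of match_poly. *)
Lemma match_polyE S : match_poly R e S = mu S.
Proof.
rewrite /match_poly /mu [RHS](partition_big (fun M : {set {set T}} =>
  inord #|M| : 'I_(#|S| %/ 2).+1) predT) //=.
apply: eq_bigr => r _.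
rewrite /nmatch -[#|[set _ | _]|]sum1_card natr_sum mulr_sumr scaler_suml.
rewrite big_mkcond [RHS]big_mkcond; apply: eq_bigr => M _.
rewrite inE; case mM: (is_matching e S M) => //=.
have ltM : (#|M| < (#|S| %/ 2).+1)%N by rewrite ltnS leq_divRL // muln2 matching_card.
rewrite -val_eqE /= inordK //; case: eqP => [<-|] //=.
by rewrite mulr1.
Qed.

(* mu S is monic of degree #|S|: only the empty matching reaches 'X^#|S|. *)
Lemma mu_coef_top S : (mu S)`_#|S| = 1.
Proof.
rewrite /mu coef_sum (bigD1 set0) ?matching0 //= /mterm cards0 coefZ coefXn.
rewrite subn0 eqxx mulr1 big1 ?addr0 // => M /andP[mM M0].
have M_gt0 : (0 < #|M|)%N by rewrite lt0n cards_eq0.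
rewrite coefZ coefXn; case: eqP => [E|]; last by rewrite mulr0.
suff : (#|S| - #|M|.*2 < #|S|)%N by rewrite -E ltnn.
rewrite ltn_subrL double_gt0 M_gt0 /=.
by apply: leq_trans (matching_card mM); rewrite double_gt0.
Qed.

(* Hence the matching polynomial never vanishes, so mult is meaningful. *)
Lemma mu_neq0 S : mu S != 0.
Proof.
apply/eqP => mu0; have := mu_coef_top S.
by rewrite mu0 coef0 => /eqP; rewrite eq_sym oner_eq0.
Qed.

Lemma sum_uncovered S u : u \in S ->
  \sum_(M | is_matching e S M && (u \notin cover M)) mterm S M = 'X * mu (S :\ u).
Proof.
move=> uS; rewrite /mu mulr_sumr; apply: eq_big => [M|M]; first by rewrite matching_del.
move=> /andP[mM nc]; have mM' : is_matching e (S :\ u) M by rewrite -matching_del ?mM.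
rewrite /mterm -scalerAr -exprS (cardsD1 u S) uS add1n subSn //.
exact: matching_card mM'.
Qed.

Lemma sum_covered S u w : u \in S -> w \in S -> e u w ->
  \sum_(M | is_matching e S M && ([set u; w] \in M)) mterm S M =
  - mu (S :\: [set u; w]).
Proof.
move=> uS wS euw; set B := [set u; w].
rewrite (reindex_onto (fun M' => B |: M') (fun M => M :\ B)); last first.
  by move=> M /andP[_ BM]; apply: setD1K.
have EB M' : ((B |: M') :\ B == M') = (B \notin M').
  have [BM|BM] /= := boolP (B \in M'); last by rewrite setU1K ?eqxx.
  by apply/negbTE; apply: contraTneq BM => <-; rewrite !inE eqxx.
rewrite (eq_bigl (fun M' => is_matching e S (B |: M') && (B \notin M'))); last first.
  by move=> M' /=; rewrite setU11 andbT EB.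
rewrite /mu -sumrN; apply: eq_big => [M'|M' /andP[_ nM]]; first by rewrite matching_add.
have sizeB : #|S :\: B| = (#|S| - 2)%N.
  by rewrite cardsD (setIidPr _) ?cards2 ?(edge_neq euw) // subUset !sub1set uS wS.
rewrite /mterm cardsU1 nM add1n exprS mulN1r scaleNr sizeB.
by rewrite doubleS -add2n subnDA.
Qed.

Lemma mu_rec S u : u \in S ->
  mu S = 'X * mu (S :\ u) - \sum_(w | (w \in S) && e u w) mu (S :\: [set u; w]).
Proof.
move=> uS; rewrite -sum_uncovered // -sumrN.
rewrite (eq_bigr (fun w => \sum_(M | is_matching e S M && ([set u; w] \in M))
   mterm S M)); last by move=> w /andP[wS euw]; rewrite sum_covered.
rewrite /mu (bigID (fun M => u \in cover M)) /= addrC; congr (_ + _).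
rewrite (exchange_big_dep (fun M => is_matching e S M && (u \in cover M))) /=.
  2: by move=> w M _ /andP[-> /block_cover].
apply: eq_bigr => M /andP[mM uM]; have [w0 B0] := cover_block mM uM.
have [euw0 _ w0S] := block_edge mM B0.
rewrite (bigD1 w0) /=; last by rewrite w0S euw0 mM B0.
rewrite big1 ?addr0 // => w /andP[/andP[_ /andP[_ B]] nw].
by rewrite (block_uniq mM B B0) eqxx in nw.
Qed.

Definition defect S u v : {poly R} :=
  mu (S :\ u) * mu (S :\ v) - mu S * mu (S :\: [set u; v]).

(* Applying the vertex recurrence at u to mu S and to mu (S :\ v):
   the defect splits according to the first step u -> w of a u-v path. *)
Lemma defect_rec S u v : u \in S -> v \in S -> u != v ->
  defect S u v = (if e u v then mu (S :\: [set u; v]) ^+ 2 else 0)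
               + \sum_(w | (w \in S) && e u w && (w != v)) defect (S :\ u) w v.
Proof.
move=> uS vS nuv.
have uSv : u \in S :\ v by rewrite !inE uS andbT; apply: contraNneq nuv => ->.
rewrite /defect (mu_rec uS) (mu_rec uSv).
have -> : S :\ v :\ u = S :\: [set u; v] by rewrite setDDl setUC.
set a := mu (S :\ u); set P := mu (S :\: [set u; v]).
set W := fun w => (w \in S) && e u w && (w != v).
have first_step : \sum_(w | (w \in S) && e u w) mu (S :\: [set u; w]) =
    (if e u v then P else 0) + \sum_(w | W w) mu (S :\: [set u; w]).
  rewrite (bigID (fun w => w == v)) /=; congr (_ + _).
  case: ifP => euv.
    rewrite (big_pred1 v) // => w /=.
    by have [->|_] := eqVneq w v; rewrite ?vS ?euv ?andbF.
  by rewrite big_pred0 // => w; have [->|_] := eqVneq w v; rewrite ?euv ?andbF.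
have first_step_Sv : \sum_(w | (w \in S :\ v) && e u w) mu (S :\ v :\: [set u; w]) =
    \sum_(w | W w) mu (S :\ v :\: [set u; w]).
  by apply: eq_bigl => w; rewrite /W !inE; case: (w != v); rewrite ?andbT ?andbF.
rewrite first_step first_step_Sv.
have -> : \sum_(w | W w) defect (S :\ u) w v =
    \sum_(w | W w) (mu (S :\: [set u; w]) * P - a * mu (S :\ v :\: [set u; w])).
  apply: eq_bigr => w _; rewrite /defect !setDDl; congr (_ - _ * mu _).
  by apply/setP => x; rewrite !inE; case: (x == u); case: (x == v); case: (x == w).
rewrite sumrB -mulr_suml -mulr_sumr.
by case: ifP => _; rewrite ?expr2; ring.
Qed.

Lemma heilmann_lieb n S u v : (#|S| <= n)%N -> u \in S -> v \in S -> u != v ->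
  defect S u v = \sum_(s <- upaths n S u v) mu (S :\: [set x in u :: s]) ^+ 2.
Proof.
elim: n S u => [|n IH] S u; first by rewrite leqn0 => /eqP/cards0_eq->; rewrite inE.
move=> cardS uS vS nuv; have cardSu : (#|S :\ u| <= n)%N.
  by move: cardS; rewrite (cardsD1 u S) uS.
rewrite defect_rec // /= big_cat big_allpairs_dep /=; congr (_ + _).
  by case: (e u v); rewrite ?big_nil // big_seq1 set_cons set_seq1.
rewrite big_enum_cond /=; apply: eq_big => [w|w /andP[/andP[wS euw] nwv]].
  by rewrite andbT !inE andbA.
have wSu : w \in S :\ u by rewrite !inE wS eq_sym edge_neq.
have vSu : v \in S :\ u by rewrite !inE vS eq_sym nuv.
rewrite IH //.
by apply: eq_bigr => s _; rewrite (set_cons u) setDDl.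
Qed.

End MatchingPolynomial.
End Graph.

Section SumOfSquares.
Variables (R : realFieldType) (c : R).
Local Open Scope ring_scope.
Implicit Types (p : {poly R}) (ps : seq {poly R}).

Lemma root_sum_sqr ps : root (\sum_(p <- ps) p ^+ 2) c -> all (root^~ c) ps.
Proof.
rewrite /root horner_sum (eq_bigr _ (fun p _ => horner_exp p c 2)).
rewrite psumr_eq0 => [/allP sq0|p _]; last exact: sqr_ge0.
by apply/allP => p /sq0; rewrite sqrf_eq0.
Qed.

Lemma dvdp_sum_sqr m ps : {in ps, forall p, ('X - c%:P) ^+ m %| p} ->
  ('X - c%:P) ^+ m.*2 %| \sum_(p <- ps) p ^+ 2.
Proof.
elim: ps => [|p ps IH] dvd_ps; first by rewrite big_nil dvdp0.
rewrite big_cons dvdp_add //; last by apply: IH => q qps; rewrite dvd_ps // inE qps orbT.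
by rewrite -addnn exprD expr2 dvdp_mul // dvd_ps ?mem_head.
Qed.

Lemma ndvdp_sum_sqr m ps p0 : {in ps, forall p, p != 0} -> p0 \in ps ->
  (mup c p0 <= m)%N -> ~~ (('X - c%:P) ^+ m.*2.+1 %| \sum_(p <- ps) p ^+ 2).
Proof.
move=> nz_ps p0ps p0m.
have ex_mult : exists k, has (fun p => mup c p == k) ps.
  by exists (mup c p0); apply/hasP; exists p0.
case: (ex_minnP ex_mult) => k /hasP[p1 p1ps /eqP p1k] kmin.
have k_le p : p \in ps -> (k <= mup c p)%N by move=> pps; apply/kmin/hasP; exists p.
set d := ('X - c%:P) ^+ k.
have d_dvd p : p \in ps -> d %| p by move=> pps; rewrite -mup_geq ?nz_ps ?k_le.
have sum_factor : \sum_(p <- ps) p ^+ 2 = (\sum_(p <- ps) (p %/ d) ^+ 2) * d ^+ 2.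
  rewrite mulr_suml big_seq [RHS]big_seq; apply: eq_bigr => p pps.
  by rewrite -exprMn divpK ?d_dvd.
have p1_quo : ~~ root (p1 %/ d) c.
  apply/negP => root1; have : (k.+1 <= mup c p1)%N; last by rewrite p1k ltnn.
  rewrite mup_geq ?nz_ps // exprS -[p1](divpK (d_dvd _ p1ps)) -/d.
  by rewrite dvdp_mul2r ?expf_neq0 ?polyXsubC_eq0 // dvdp_XsubCl.
have dn0 : d ^+ 2 != 0 by rewrite !expf_neq0 ?polyXsubC_eq0.
apply: contra (p1_quo) => dvd_sum.
have : ('X - c%:P) ^+ k.*2.+1 %| \sum_(p <- ps) p ^+ 2.
  apply: dvdp_trans dvd_sum; rewrite dvdp_exp2l // ltnS leq_double.
  exact: leq_trans (k_le _ p0ps) p0m.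
have dk2 : ('X - c%:P) ^+ k.*2 = d ^+ 2 by rewrite -exprM muln2.
rewrite sum_factor exprS dk2 dvdp_mul2r // dvdp_XsubCl.
rewrite -(big_map (fun p => p %/ d) xpredT (fun q => q ^+ 2)).
by move=> /root_sum_sqr/allP; apply; apply: map_f.
Qed.

Lemma mult_criterion m (a b f g : {poly R}) ps :
  a != 0 -> b != 0 -> f != 0 -> g != 0 -> {in ps, forall p, p != 0} ->
  (m < mup c a)%N -> (m < mup c b)%N -> mup c f = m ->
  a * b - f * g = \sum_(p <- ps) p ^+ 2 ->
  (mup c g <= m)%N = has (fun p => mup c p <= m)%N ps.
Proof.
move=> a0 b0 f0 g0 nz_ps ma mb mf identity.
have dvd_ab : ('X - c%:P) ^+ m.+1.*2 %| a * b.
  by rewrite -addnn exprD dvdp_mul // -mup_geq.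
have mfg : mup c (f * g) = (m + mup c g)%N by rewrite mupM // mf.
apply/idP/idP => [gm|/hasP[p pps pm]].
  apply: contraLR gm => /hasPn small; rewrite -ltnNge.
  have dvd_sum : ('X - c%:P) ^+ m.+1.*2 %| \sum_(p <- ps) p ^+ 2.
    by apply: dvdp_sum_sqr => p pps; rewrite -mup_geq ?nz_ps // ltnNge small.
  have : ('X - c%:P) ^+ m.*2.+1 %| f * g.
    have -> : f * g = a * b - \sum_(p <- ps) p ^+ 2.
      by rewrite -identity opprB addrCA subrr addr0.
    by rewrite dvdp_sub // (dvdp_trans _ dvd_ab, dvdp_trans _ dvd_sum) // dvdp_exp2l.
  by rewrite -mup_geq ?mulf_neq0 // mfg -addnn ltn_add2l.
rewrite leqNgt; apply/negP => gm; have := ndvdp_sum_sqr nz_ps pps pm.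
rewrite -identity dvdp_sub //; first by rewrite (dvdp_trans _ dvd_ab) // dvdp_exp2l.
by rewrite -mup_geq ?mulf_neq0 // mfg -addnn ltn_add2l.
Qed.

End SumOfSquares.

Theorem lemma6p3 (T : finType) (e : rel T) (e_sym : symmetric e)
    (e_irr : irreflexive e) (R : rcfType) (theta : R) (u v : T) :
  u != v -> theta_positive e theta u -> theta_positive e theta v ->
  ((mult e theta (~: [set u; v]) <= mult e theta [set: T])%N <->
   exists s : seq T,
     [/\ path e u s, last u s = v, uniq (u :: s) &
         (mult e theta (~: [set x in u :: s]) <= mult e theta [set: T])%N]).
Proof.
move=> nuv pos_u pos_v; set S := [set: T].
have multE X : mult e theta X = mup theta (mu e R X) by rewrite /mult match_polyE.
move: pos_u pos_v; rewrite /theta_positive !multE -!setTD => pos_u pos_v.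
set F := fun s => mu e R (S :\: [set x in u :: s]).
have identity := heilmann_lieb e_sym e_irr R (leqnn #|S|) (in_setT u) (in_setT v) nuv.
rewrite /defect -(big_map F xpredT (fun p => (p ^+ 2)%R)) in identity.
rewrite (mult_criterion _ _ _ _ _ _ _ (erefl _) identity) ?mu_neq0 ?pos_u ?pos_v //.
  rewrite has_map; split => [/hasP[s] | [s [P L U Fs]]].
    rewrite upathsP ?in_setT // => /and4P[P /eqP L U _] Fs.
    by exists s; rewrite multE -setTD.
  apply/hasP; exists s; last by rewrite /= /F setTD -multE.
  rewrite upathsP ?in_setT // /upath P L U eqxx.
  by apply/allP => x; rewrite in_setT.
by move=> p /mapP[s _ ->]; apply: mu_neq0.
Qed.
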